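(* Let $X$ be a $G$-space and $\rho_X\colon X\to X/G$ the orbit map. Then $\mathrm{cat}(\rho_X)\le\mathrm{cat}^{G,\infty}(X)$.
   Context: All spaces are well-pointed CW complexes, $G$ a topological group acting cellularly; $x_0\in X$ is the base point. For a map $f\colon X\to Y$, $\mathrm{cat}(f)$ is the least $n\ge0$ such that $X$ has an open cover by $n+1$ sets on each of which $f$ is nullhomotopic. $PX$ is the path space; $\mathcal{P}_k(X)=\{(\gamma_1,\dots,\gamma_k)\in(PX)^k\mid G\gamma_i(1)=G\gamma_{i+1}(0),\ 1\le i\le k-1\}$; $P^k_*(X)=\{(\gamma_1,\dots,\gamma_k)\in\mathcal{P}_k(X)\mid\gamma_1(0)=x_0\}$ with fibration $q_k\colon P^k_*(X)\to X$, $q_k(\gamma_1,\dots,\gamma_k)=\gamma_k(1)$. $\mathrm{secat}(f)$ (reduced) is the least $n$ such that the base of $f$ has an open cover $U_0,\dots,U_n$ with homotopy sections of $f$ over each $U_i$. $\mathrm{cat}^{G,k}(X)=\mathrm{secat}(q_k)$ and $\mathrm{cat}^{G,\infty}(X)=\min_{k\ge1}\mathrm{cat}^{G,k}(X)$. *)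

From HB Require Import structures.
From mathcomp Require Import all_boot all_order all_algebra generic_quotient.
From mathcomp Require Import all_classical all_reals topology normedtype.
Import numFieldNormedType.Exports.
Set Implicit Arguments. Unset Strict Implicit. Unset Printing Implicit Defensive.
Import Order.TTheory GRing.Theory Num.Theory.
Local Open Scope classical_set_scope.
Local Open Scope ring_scope.
Local Open Scope quotient_scope.

Record TopGroupAction (X : topologicalType) := {
  tg_carrier :> topologicalType;
  tg_mul : tg_carrier -> tg_carrier -> tg_carrier;
  tg_inv : tg_carrier -> tg_carrier;
  tg_one : tg_carrier;
  tg_mulA : forall a b c, tg_mul a (tg_mul b c) = tg_mul (tg_mul a b) c;
  tg_mul1g : forall a, tg_mul tg_one a = a;
  tg_mulVg : forall a, tg_mul (tg_inv a) a = tg_one;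
  tg_mul_cont : continuous (fun p : tg_carrier * tg_carrier => tg_mul p.1 p.2);
  tg_inv_cont : continuous tg_inv;
  tg_act : tg_carrier -> X -> X;
  tg_act_cont : continuous (fun p : tg_carrier * X => tg_act p.1 p.2);
  tg_act1 : forall x, tg_act tg_one x = x;
  tg_actM : forall a b x, tg_act (tg_mul a b) x = tg_act a (tg_act b x)
}.

Section Orbits.
Variables (X : topologicalType) (A : TopGroupAction X).

Definition same_orbit (x y : X) : Prop := exists g : A, tg_act g x = y.

Lemma tg_mulg1 (a : A) : tg_mul a (tg_one A) = a.
Proof.
have mulgV : forall b : A, tg_mul b (tg_inv b) = tg_one A.
  move=> b; rewrite -[in LHS](tg_mul1g (tg_mul b (tg_inv b))).
  rewrite -(tg_mulVg (tg_inv b)) -tg_mulA (tg_mulA (tg_inv b)) (tg_mulA (tg_inv (tg_inv b))).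
  by rewrite !tg_mulVg -tg_mulA tg_mul1g tg_mulVg.
by rewrite -(tg_mulVg a) tg_mulA mulgV tg_mul1g.
Qed.

Definition orbit_relb (x y : X) : bool := `[< same_orbit x y >].

Lemma orbit_relb_refl : reflexive orbit_relb.
Proof. by move=> x; apply/asboolP; exists (tg_one A); rewrite tg_act1. Qed.

Lemma orbit_relb_sym : symmetric orbit_relb.
Proof.
have h : forall x y, orbit_relb x y -> orbit_relb y x.
  move=> x y /asboolP [g <-]; apply/asboolP; exists (tg_inv g).
  by rewrite -tg_actM tg_mulVg tg_act1.
by move=> x y; apply/idP/idP => /h.
Qed.

Lemma orbit_relb_trans : transitive orbit_relb.
Proof.
move=> y x z /asboolP [g <-] /asboolP [h <-]; apply/asboolP.
by exists (tg_mul h g); rewrite tg_actM.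
Qed.

Definition orbit_equiv : equiv_rel X :=
  EquivRel orbit_relb orbit_relb_refl orbit_relb_sym orbit_relb_trans.

Definition orbit_space := quotient_topology {eq_quot orbit_equiv}.
Definition orbit_map : X -> orbit_space := \pi_orbit_space.
End Orbits.

Section Homotopy.
Variable R : realType.

Definition homotopic_on {X Y : topologicalType} (U : set X) (f g : X -> Y) : Prop :=
  exists H : X * R -> Y,
    {within (U `*` `[0%R, 1%R] : set (X * R)), continuous H} /\
    (forall x, U x -> H (x, 0%R) = f x /\ H (x, 1%R) = g x).

Definition nullhomotopic_on {X Y : topologicalType} (U : set X) (f : X -> Y) : Prop :=
  exists y : Y, homotopic_on U f (cst y).

Definition cat_le {X Y : topologicalType} (f : X -> Y) (n : nat) : Prop :=
  exists U : 'I_n.+1 -> set X,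
    (forall i, open (U i)) /\ \bigcup_i U i = setT /\
    (forall i, nullhomotopic_on (U i) f).

(* secat(p) <= n for p : E -> B, where the total space E is a subspace of T. *)
Definition secat_le {T B : topologicalType} (E : set T) (p : T -> B) (n : nat) : Prop :=
  exists U : 'I_n.+1 -> set B,
    (forall i, open (U i)) /\ \bigcup_i U i = setT /\
    (forall i, exists s : B -> T,
        {within U i, continuous s} /\ (forall b, U i b -> E (s b)) /\
        homotopic_on (U i) (p \o s) idfun).

Definition I01 : Type := set_type (`[0%R, 1%R]%classic : set R).

Lemma zero_in01 : (0%R : R) \in (`[0%R, 1%R]%classic : set R).
Proof. by apply/mem_set => /=; rewrite in_itv /= lexx ler01. Qed.
Lemma one_in01 : (1%R : R) \in (`[0%R, 1%R]%classic : set R).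
Proof. by apply/mem_set => /=; rewrite in_itv /= lexx ler01. Qed.
Definition t0 : I01 := exist _ 0%R zero_in01.
Definition t1 : I01 := exist _ 1%R one_in01.

(** Free path space PX = C(I, X) with the compact-open topology
    (as the subspace of continuous maps of {compact-open, I -> X}). *)
Definition PathSp (X : topologicalType) := {compact-open, I01 -> X}.

(** (PX)^k with the product topology; we index by k = m.+1 (k >= 1). *)
Definition PathTuple (X : topologicalType) (m : nat) :=
  {ptws 'I_m.+1 -> PathSp X}.

Section Pk.
Variables (X : topologicalType) (A : TopGroupAction X) (x0 : X) (m : nat).

Definition Pk_star : set (PathTuple X m) :=
  [set gam | (forall i, continuous (gam i : I01 -> X)) /\
     (forall i j : 'I_m.+1, val j = (val i).+1 ->
        same_orbit A ((gam i : I01 -> X) t1) ((gam j : I01 -> X) t0)) /\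
     (gam ord0 : I01 -> X) t0 = x0].

Definition qk (gam : PathTuple X m) : X := (gam ord_max : I01 -> X) t1.
End Pk.

Definition catG_le (X : topologicalType) (A : TopGroupAction X) (x0 : X)
    (m n : nat) : Prop :=
  secat_le (@Pk_star X A x0 m) (@qk X m) n.

Definition catGinf_le (X : topologicalType) (A : TopGroupAction X) (x0 : X)
    (n : nat) : Prop :=
  exists m : nat, catG_le A x0 m n.
End Homotopy.

From HB Require Import structures.
From mathcomp Require Import all_boot all_order all_algebra generic_quotient.
From mathcomp Require Import all_classical all_reals topology normedtype.
From mathcomp Require Import lra.
Import numFieldNormedType.Exports.
Set Implicit Arguments. Unset Strict Implicit. Unset Printing Implicit Defensive.
Import Order.TTheory GRing.Theory Num.Theory.
Local Open Scope classical_set_scope.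
Local Open Scope ring_scope.

(* A homotopy section of q_k over an open set U assigns to each x in U paths
   gamma_1, ..., gamma_k with gamma_1(0) = x0 and gamma_i(1), gamma_(i+1)(0) in
   one G-orbit, together with a path from gamma_k(1) to x.  In X/G the endpoints
   of consecutive paths coincide, so running the last path and then
   gamma_k, ..., gamma_1 backwards gives a path from rho(x) to rho(x0) depending
   continuously on x: a nullhomotopy of rho on U.  Hence every secat cover for q_k
   is a cat cover for rho. *)

Lemma within_continuous_precomp {S T Y : topologicalType} (A : set S) (B : set T)
    (F : S -> Y) (phi : T -> S) :
  {within A, continuous F} -> continuous phi -> phi @` B `<=` A ->
  {within B, continuous (F \o phi)}.
Proof.
move=> /subspace_continuousP cF cphi BA; apply/subspace_continuousP => x Bx.
apply: cvg_trans (cF _ (BA _ (imageP _ Bx))).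
move=> P /=; rewrite !nbhs_simpl /= /within => /cphi; rewrite nbhs_simpl => h.
have {}h : nbhs x (fun y => A (phi y) -> P (F (phi y))) by exact: h.
by apply: filterS h => y /= + By; apply; apply: BA; exact: imageP.
Qed.

Lemma within_continuous_paste {T Y : topologicalType} (S C1 C2 : set T) (f : T -> Y) :
  closed C1 -> closed C2 -> S `<=` C1 `|` C2 ->
  {within S `&` C1, continuous f} -> {within S `&` C2, continuous f} ->
  {within S, continuous f}.
Proof.
move=> c1 c2 SC ctsA ctsB; apply/continuous_closedP => W oW.
case/continuous_closedP/(_ _ oW)/closed_subspaceP: ctsA => V1 cV1 V1W.
case/continuous_closedP/(_ _ oW)/closed_subspaceP: ctsB => V2 cV2 V2W.
apply/closed_subspaceP; exists ((V1 `&` C1) `|` (V2 `&` C2)).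
  by apply: closedU; exact: closedI.
rewrite eqEsubset; split=> t.
  case=> [[[a b]|[a b]] St]; split => //.
  - by have : (V1 `&` (S `&` C1)) t by []; rewrite V1W => -[].
  - by have : (V2 `&` (S `&` C2)) t by []; rewrite V2W => -[].
move=> [ft St]; split => //; case: (SC _ St) => Ct; [left|right]; split => //.
- by have : ((f @^-1` W) `&` (S `&` C1)) t by []; rewrite -V1W => -[].
- by have : ((f @^-1` W) `&` (S `&` C2)) t by []; rewrite -V2W => -[].
Qed.

Lemma fst_continuous {T U : topologicalType} : continuous (@fst T U).
Proof. by move=> [a b]; exact: cvg_fst. Qed.

Lemma snd_continuous {T U : topologicalType} : continuous (@snd T U).
Proof. by move=> [a b]; exact: cvg_snd. Qed.

Lemma continuous_map_snd {T U V : topologicalType} (h : U -> V) :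
  continuous h -> continuous (fun z : T * U => (z.1, h z.2)).
Proof.
move=> hc z; have z1 : w.1 @[w --> z] --> z.1 by exact: fst_continuous.
have z2 : h w.2 @[w --> z] --> h z.2.
  by apply: (@continuous_comp _ _ _ snd h); [exact: snd_continuous|exact: hc].
exact: cvg_pair z1 z2.
Qed.

(* Unlike [eval_continuous], only the function at which we evaluate needs to be
   continuous. *)
Lemma eval_continuous_at {T Y : topologicalType} (f : {compact-open, T -> Y}) (t : T) :
  locally_compact [set: T] -> regular_space T -> {for t, continuous (f : T -> Y)} ->
  {for (f, t), continuous (fun p : {compact-open, T -> Y} * T => (p.1 : T -> Y) p.2)}.
Proof.
move=> lcT regT cft D; rewrite /= nbhsE => -[O [oO Oft]] /filterS; apply.
have [B] := @lcT t I; rewrite withinET => Bt [cptB clB].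
have [C Ct CO] : exists2 C, nbhs t C & forall z, closure C z -> O (f z).
  have [|C ? ?] := regT t (f @^-1` O); last by exists C.
  by apply: cft; exact: open_nbhs_nbhs.
exists ([set g : {compact-open, T -> Y} | g @` (B `&` closure C) `<=` O], B `&` closure C).
  split; last by apply: filterI => //; apply: filterS Ct; exact: subset_closure.
  apply: open_nbhs_nbhs; split; last by move=> _ [z [_ Cz] <-]; exact: CO.
  apply: compact_open_open => //; apply: compact_closedI => //; exact: closed_closure.
by case=> g r /= [gO BCr]; apply: gO; exists r.
Qed.

Section UnitInterval.
Variable R : realType.

Definition clamp01 (r : R) : R := Order.min 1 (Order.max 0 r).

Lemma clamp01_in01 r : clamp01 r \in (`[0%R, 1%R]%classic : set R).
Proof.
apply/mem_set => /=; rewrite in_itv /= /clamp01.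
by rewrite le_min ler01 le_max lexx ge_min lexx.
Qed.

Definition I01_of (r : R) : I01 R := exist _ (clamp01 r) (clamp01_in01 r).

Lemma clamp01_id (r : R) : 0 <= r <= 1 -> clamp01 r = r.
Proof. by move=> /andP[r0 r1]; rewrite /clamp01 (max_idPr r0) (min_idPr r1). Qed.

Lemma I01_of0 : I01_of 0 = t0 R.
Proof. by apply: val_inj; rewrite /= clamp01_id // lexx ler01. Qed.

Lemma I01_of1 : I01_of 1 = t1 R.
Proof. by apply: val_inj; rewrite /= clamp01_id // lexx ler01. Qed.

Lemma I01_of_continuous : continuous I01_of.
Proof.
apply: (@continuous_comp_initial _ _ _ (@set_val R _)) => x.
apply: (@continuous_min R R (cst 1) (fun r => Order.max 0 r)); first exact: cvg_cst.
by apply: (@continuous_max R R (cst 0) id); [exact: cvg_cst|exact: cvg_id].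
Qed.

Lemma I01_compact : compact [set: I01 R].
Proof.
have -> : [set: I01 R] = I01_of @` `[0, 1].
  apply/seteqP; split => // y _; have y01 := set_valP y.
  exists (val y) => //; apply: val_inj.
  by rewrite /= clamp01_id //; move: y01; rewrite /= in_itv.
apply: continuous_compact; last exact: segment_compact.
exact/continuous_subspaceT/I01_of_continuous.
Qed.

Lemma I01_locally_compact : locally_compact [set: I01 R].
Proof.
move=> t _; exists setT; first by rewrite withinET; exact: filterT.
by split; [exact: I01_compact|exact: closedT].
Qed.
End UnitInterval.

Section Concatenation.
Variables (R : realType) (T Y : topologicalType) (U : set T) (p : nat -> T * R -> Y).

Fixpoint concat (N : nat) (z : T * R) : Y :=
  if N is N'.+1 then (if z.2 <= N%:R then concat N' z else p N z) else p 0 z.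

Lemma concat0 N x : concat N (x, 0) = p 0 (x, 0).
Proof. by elim: N => //= N ->; rewrite ler0n. Qed.

Lemma concat_end N x : concat N (x, N.+1%:R) = p N (x, N.+1%:R).
Proof. by case: N => //= N; rewrite ifF // ler_nat ltnn. Qed.

Lemma closed_snd_le (a : R) : closed [set z : T * R | z.2 <= a].
Proof.
have -> : [set z : T * R | z.2 <= a] = snd @^-1` `]-oo, a].
  by apply/seteqP; split => z /=; rewrite in_itv.
exact: (continuous_closedP _).1 snd_continuous _ (@lray_closed _ R a).
Qed.

Lemma closed_snd_ge (a : R) : closed [set z : T * R | a <= z.2].
Proof.
have -> : [set z : T * R | a <= z.2] = snd @^-1` `[a, +oo[.
  by apply/seteqP; split => z /=; rewrite in_itv /= andbT.
exact: (continuous_closedP _).1 snd_continuous _ (@rray_closed _ R a).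
Qed.

Lemma concat_continuous N :
  (forall j, (j <= N)%N -> {within U `*` `[j%:R, j.+1%:R], continuous (p j)}) ->
  (forall j x, (j < N)%N -> U x -> p j (x, j.+1%:R) = p j.+1 (x, j.+1%:R)) ->
  {within U `*` `[0, N.+1%:R], continuous (concat N)}.
Proof.
elim: N => [hp _|N IH hp hb]; first exact: hp.
apply: (within_continuous_paste (@closed_snd_le N.+1%:R) (@closed_snd_ge N.+1%:R)).
- by move=> z _ /=; case: (leP z.2 N.+1%:R) => h; [left|right; exact: ltW].
- have -> : (U `*` `[0, N.+2%:R] : set (T * R)) `&` [set z | z.2 <= N.+1%:R]
            = U `*` `[0, N.+1%:R].
    apply/seteqP; split => -[x t] /=; rewrite !in_itv /=.
      by move=> [[Ux /andP[t0 _]] ta]; split => //; apply/andP.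
    move=> [Ux /andP[t0 ta]]; split => //; split => //; apply/andP; split => //.
    by rewrite (le_trans ta) ?ler_nat.
  apply: subspace_eq_continuous
    (IH (fun j jN => hp j (leqW jN)) (fun j x jN => hb j x (ltnW jN))).
  move=> [x t]; rewrite inE /= in_itv /= => -[_ /andP[_ tN]].
  by rewrite /from_subspace /= tN.
- have -> : (U `*` `[0, N.+2%:R] : set (T * R)) `&` [set z | N.+1%:R <= z.2]
            = U `*` `[N.+1%:R, N.+2%:R].
    apply/seteqP; split => -[x t] /=; rewrite !in_itv /=.
      by move=> [[Ux /andP[_ tN]] at_]; split => //; apply/andP.
    move=> [Ux /andP[at_ tN]]; split => //; split => //; apply/andP; split => //.
    by rewrite (le_trans _ at_).
  apply: subspace_eq_continuous (hp N.+1 (leqnn _)).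
  move=> [x t]; rewrite inE /= in_itv /= => -[Ux /andP[at_ _]].
  rewrite /from_subspace /=; case: ifPn => // ta.
  have -> : t = N.+1%:R by apply/eqP; rewrite eq_le ta at_.
  by rewrite concat_end hb.
Qed.
End Concatenation.

Lemma tuple_eval_continuous_at (R : realType) (X : topologicalType) (m : nat)
    (gam : PathTuple R X m) (i : 'I_m.+1) (t : I01 R) :
  continuous (gam i : I01 R -> X) ->
  {for (gam, t), continuous (fun q : PathTuple R X m * I01 R => (q.1 i : I01 R -> X) q.2)}.
Proof.
move=> gam_cont; pose at_i (q : PathTuple R X m) : PathSp R X := q i.
have at_i_cont : continuous at_i by exact: (@proj_continuous _ (fun _ => PathSp R X) i).
have pair_cont : continuous (fun q : PathTuple R X m * I01 R => (at_i q.1, q.2)).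
  move=> q; have q1 : at_i w.1 @[w --> q] --> at_i q.1.
    by apply: (@continuous_comp _ _ _ fst at_i); [exact: fst_continuous|exact: at_i_cont].
  have q2 : w.2 @[w --> q] --> q.2 by exact: snd_continuous.
  exact: cvg_pair q1 q2.
have := continuous_comp (pair_cont (gam, t)) (@eval_continuous_at _ _ (at_i gam) t
  (@I01_locally_compact R) uniform_regular (gam_cont t)).
by [].
Qed.

Lemma orbit_map_eq (X : topologicalType) (A : TopGroupAction X) (a b : X) :
  same_orbit A a b -> orbit_map A a = orbit_map A b.
Proof. by move=> ab; apply/eqquotP/asboolP. Qed.

Section OrbitNullhomotopy.
Variables (R : realType) (X : topologicalType) (A : TopGroupAction X) (x0 : X) (m : nat).
Variables (U : set X) (s : X -> PathTuple R X m) (H : X * R -> X).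
Hypothesis s_cont : {within U, continuous s}.
Hypothesis s_Pk : forall x, U x -> Pk_star A x0 (s x).
Hypothesis H_cont : {within (U `*` `[0, 1] : set (X * R)), continuous H}.
Hypothesis H_ends : forall x, U x -> H (x, 0) = qk (s x) /\ H (x, 1) = x.

Local Notation rho := (orbit_map A).

Definition path_of (x : X) (i : 'I_m.+1) : I01 R -> X := s x i.

(* Piece 0 runs the homotopy backwards on [0, 1]; piece j+1 runs the path
   gamma_(k-j) backwards on [j+1, j+2]. *)
Definition orbit_piece (j : nat) (z : X * R) : orbit_space A :=
  if j is j'.+1 then rho (path_of z.1 (inord (m - j')) (I01_of (j'.+2%:R - z.2)))
  else rho (H (z.1, 1 - z.2)).

Lemma orbit_piece0_continuous :
  {within (U `*` `[0%:R, 1%:R] : set (X * R)), continuous (orbit_piece 0)}.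
Proof.
suff : {within (U `*` `[0%:R, 1%:R] : set (X * R)),
    continuous (rho \o (fun z : X * R => H (z.1, 1 - z.2)))} by [].
apply: within_continuous_comp; first by move=> ? _; exact: pi_continuous.
apply: (@within_continuous_precomp _ _ _ _ _ _ (fun z : X * R => (z.1, 1 - z.2)) H_cont).
  apply: (@continuous_map_snd _ _ _ (fun r : R => 1 - r)) => r.
  by apply: cvgB; [exact: cvg_cst|exact: cvg_id].
move=> y [[x t] [Ux /=]]; rewrite in_itv /= => /andP[t0 t1] <-.
by split => //=; rewrite in_itv /=; apply/andP; split; lra.
Qed.

Lemma orbit_pieceS_continuous j (B : set R) :
  {within (U `*` B : set (X * R)), continuous (orbit_piece j.+1)}.
Proof.
set i : 'I_m.+1 := inord (m - j).
pose f (z : X * R) := (s z.1, I01_of (j.+2%:R - z.2)).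
pose ev (q : PathTuple R X m * I01 R) := (q.1 i : I01 R -> X) q.2.
suff : {within (U `*` B : set (X * R)), continuous ((rho \o ev) \o f)} by [].
apply: within_continuous_comp.
  move=> _ /[!inE] -[[x t] [/= Ux _] <-].
  apply: continuous_comp; last exact: pi_continuous.
  by apply: tuple_eval_continuous_at; have [path_cont _] := s_Pk Ux; exact: path_cont.
have s_fst : {within (U `*` B : set (X * R)), continuous (s \o fst)}.
  by apply: (within_continuous_precomp s_cont fst_continuous) => _ [y [Uy _] <-].
have I01_snd :
    {within (U `*` B : set (X * R)), continuous (fun z => I01_of (j.+2%:R - z.2))}.
  apply: continuous_subspaceT => w.
  apply: (@continuous_comp _ _ _ (fun z : X * R => j.+2%:R - z.2) (@I01_of R)).
    by apply: cvgB; [exact: cvg_cst|exact: snd_continuous].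
  exact: I01_of_continuous.
by move=> z; exact: cvg_pair (s_fst z) (I01_snd z).
Qed.

Lemma orbit_piece_glue j x : (j <= m)%N -> U x ->
  orbit_piece j (x, j.+1%:R) = orbit_piece j.+1 (x, j.+1%:R).
Proof.
move=> jm Ux; have [_ [adj s0]] := s_Pk Ux.
case: j jm => [|j] jm /=.
  rewrite subrr (proj1 (H_ends Ux)) /qk subn0.
  have -> : (2%:R - 1 : R) = 1 by rewrite [2%:R]mulrS addrK.
  rewrite I01_of1 /path_of; congr (rho ((s x _ : PathSp R X) _)).
  by apply: val_inj; rewrite /= inordK.
rewrite subrr [j.+3%:R]mulrS addrK I01_of0 I01_of1; symmetry; apply: orbit_map_eq.
by apply: adj; rewrite /= !inordK ?ltnS ?leq_subr // subnSK.
Qed.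

Lemma orbit_map_nullhomotopic : homotopic_on R U rho (cst (rho x0)).
Proof.
pose F := concat orbit_piece m.+1.
exists (fun z : X * R => F (z.1, m.+2%:R * z.2)); split.
  have F_cont : {within (U `*` `[0, m.+2%:R] : set (X * R)), continuous F}.
    apply: concat_continuous => [[_|j _]|j y jm Uy]; last exact: orbit_piece_glue.
    - exact: orbit_piece0_continuous.
    - exact: orbit_pieceS_continuous.
  apply: (@within_continuous_precomp _ _ _ _ _ _
    (fun z : X * R => (z.1, m.+2%:R * z.2)) F_cont).
    apply: (@continuous_map_snd _ _ _ (fun r : R => m.+2%:R * r)) => r.
    by apply: cvgMr; exact: cvg_id.
  move=> y [[x t] [Ux /=]]; rewrite in_itv /= => /andP[t0 t1] <-.
  have m0 : (0 : R) <= m.+2%:R by rewrite ler0n.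
  by split => //=; rewrite in_itv /=; apply/andP; split; nra.
move=> x Ux; split.
  by rewrite /F mulr0 concat0 /= subr0 (proj2 (H_ends Ux)).
rewrite /F mulr1 concat_end /= subrr I01_of0 subnn.
have [_ [_ s0]] := s_Pk Ux; rewrite /path_of -s0.
by congr (rho ((s x _ : PathSp R X) _)); apply: val_inj; rewrite /= inordK.
Qed.

End OrbitNullhomotopy.

Theorem mainTheorem5 (R : realType) (X : topologicalType)
    (A : TopGroupAction X) (x0 : X) (n : nat) :
  catGinf_le R A x0 n -> cat_le R (orbit_map A) n.
Proof.
move=> [m [U [U_open [U_cover U_sec]]]]; exists U; split => //; split => // i.
have [s [s_cont [s_Pk [H [H_cont H_ends]]]]] := U_sec i.
by exists (orbit_map A x0); exact: orbit_map_nullhomotopic H_cont H_ends.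
Qed.
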